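(* Let $n\ge 1$, $r\ge 0$, and let $J\subseteq\Delta^r_n$ be a nonempty subset. Then $J$ is M-convex if and only if its characteristic function $\chi_J\colon\Delta^r_n\to\mathbb K$ satisfies the Plücker relations \[ \sum_{k=0}^s \chi_J\big(\alpha+\epsilon_{i_0}+\dots+\widehat{\epsilon_{i_k}}+\dots+\epsilon_{i_s}\big)\cdot\chi_J\big(\alpha+\epsilon_{i_k}+\epsilon_{j_2}+\dots+\epsilon_{j_s}\big)\ \in\ N_{\mathbb K} \] for every $s\in\{2,\dots,r\}$, every $\alpha\in\Delta^{r-s}_n$ with $\delta^-_J\le\alpha$, and all $i_0,\dots,i_s,j_2,\dots,j_s\in[n]$ such that $\alpha+\epsilon_{i_0}+\dots+\epsilon_{i_s}+\epsilon_{j_2}+\dots+\epsilon_{j_s}\le\delta^+_J$. (Here the hat means the term is omitted.)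
   Context: $\Delta^r_n=\{\alpha\in\mathbb N^n:\alpha_1+\dots+\alpha_n=r\}$; $\epsilon_i$ is the $i$-th standard basis vector; $\le$ is the componentwise partial order on $\mathbb Z^n$. A nonempty $J\subseteq\Delta^r_n$ is M-convex if for all $\alpha,\beta\in J$ and every $i\in[n]$ with $\alpha_i<\beta_i$ there is $j\in[n]$ with $\alpha_j>\beta_j$ such that both $\alpha+\epsilon_i-\epsilon_j$ and $\beta-\epsilon_i+\epsilon_j$ lie in $J$. For finite $J$, $\delta^-_J=\inf J$ and $\delta^+_J=\sup J$ are the vectors with $\delta^-_{J,i}=\min\{\alpha_i:\alpha\in J\}$ and $\delta^+_{J,i}=\max\{\alpha_i:\alpha\in J\}$. The Krasner hyperfield is $\mathbb K=\{0,1\}$; a formal sum of elements of $\mathbb K$ lies in its null set $N_{\mathbb K}$ if and only if the number of summands equal to $1$ is not exactly one. $\chi_J(\alpha)=1$ if $\alpha\in J$ and $0$ otherwise. *)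

From HB Require Import structures.
From mathcomp Require Import all_boot all_order.
From mathcomp Require Import finmap.
Set Implicit Arguments. Unset Strict Implicit. Unset Printing Implicit Defensive.


Definition vec (n : nat) := {ffun 'I_n -> nat}.

Definition in_Delta (n r : nat) (a : vec n) : bool := (\sum_(t < n) a t == r)%N.

Definition vle (n : nat) (a b : vec n) : bool := [forall t, a t <= b t].

Definition eps (n : nat) (i : 'I_n) : vec n := [ffun t => nat_of_bool (t == i)].
Definition vadd (n : nat) (a b : vec n) : vec n := [ffun t => a t + b t].
Definition vsub (n : nat) (a b : vec n) : vec n := [ffun t => a t - b t].

Definition Mconvex (n : nat) (J : {fset vec n}) : Prop :=
  forall a b, a \in J -> b \in J -> forall i : 'I_n, a i < b i ->
  exists j : 'I_n, [/\ b j < a j,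
     vsub (vadd a (eps i)) (eps j) \in J &
     vsub (vadd b (eps j)) (eps i) \in J].

Definition delta_plus (n : nat) (J : {fset vec n}) : vec n :=
  [ffun t => \max_(b <- J) b t].
(* delta^-_J = inf J (componentwise min); the seed delta_plus J t is an upper
   bound of all b t with b in J, so for nonempty J this is exactly the min. *)
Definition delta_minus (n : nat) (J : {fset vec n}) : vec n :=
  [ffun t => \big[minn/delta_plus J t]_(b <- J) b t].

(* Krasner hyperfield K = {0,1} = bool; product is andb; a formal sum
   (list of summands) is in the null set iff the number of 1's is not 1. *)
Definition K_null (s : seq bool) : bool := count id s != 1%N.

Definition chi (n : nat) (J : {fset vec n}) (b : vec n) : bool := b \in J.

Definition plA (n s : nat) (alpha : vec n) (i : 'I_s.+1 -> 'I_n) (k : 'I_s.+1)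
  : vec n :=
  [ffun t => alpha t + \sum_(l < s.+1 | l != k) nat_of_bool (i l == t)].
Definition plB (n s : nat) (alpha : vec n) (i : 'I_s.+1 -> 'I_n)
  (j : 'I_s.-1 -> 'I_n) (k : 'I_s.+1) : vec n :=
  [ffun t => alpha t + nat_of_bool (i k == t)
              + \sum_(m < s.-1) nat_of_bool (j m == t)].
Definition plTot (n s : nat) (alpha : vec n) (i : 'I_s.+1 -> 'I_n)
  (j : 'I_s.-1 -> 'I_n) : vec n :=
  [ffun t => alpha t + \sum_(l < s.+1) nat_of_bool (i l == t)
              + \sum_(m < s.-1) nat_of_bool (j m == t)].

Definition Pluecker (n r : nat) (J : {fset vec n}) : Prop :=
  forall s : nat, 2 <= s <= r ->
  forall alpha : vec n, in_Delta (r - s) alpha -> vle (delta_minus J) alpha ->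
  forall (i : 'I_s.+1 -> 'I_n) (j : 'I_s.-1 -> 'I_n),
  vle (plTot alpha i j) (delta_plus J) ->
  K_null [seq chi J (plA alpha i k) && chi J (plB alpha i j k) | k <- enum 'I_s.+1].

From mathcomp Require Import all_boot all_order finmap zify.
Set Implicit Arguments. Unset Strict Implicit. Unset Printing Implicit Defensive.

(* For any two indices k, k0 the k-th Pluecker term is obtained from the k0-th
   by moving one unit from coordinate i_k to coordinate i_k0 in its first factor
   and back in its second.  So if the k0-th term is nonzero, an M-convex exchange
   between its two factors at coordinate i_k0 yields a second nonzero term.
   Conversely, for a, b in J with a_i < b_i take alpha = min(a, b), i_0 = i,
   i_1, ..., i_s listing a - b with multiplicity and j listing b - a - eps_i:
   the 0-th term is then (a, b), and any other nonzero term is an exchange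
   pair for a and b at i (the case s = 1, excluded from the relations, is an
   exchange by itself). *)

(* Quantifying over t : 'I_n gives both sides the same coercion to functions,
   which lia needs to recognise common atoms (apply/ffunP does not). *)
Lemma vec_ext n (a b : vec n) : (forall t : 'I_n, a t = b t) -> a = b.
Proof. by move=> ab; apply/ffunP. Qed.

Lemma vexchangeE n (a : vec n) (x y t : 'I_n) :
  vsub (vadd a (eps x)) (eps y) t = a t + (t == x) - (t == y).
Proof. by rewrite !ffunE. Qed.

Lemma vexchange_id n (a : vec n) (x : 'I_n) : vsub (vadd a (eps x)) (eps x) = a.
Proof. by apply: vec_ext => t; rewrite vexchangeE addnK. Qed.

Section PlueckerTerms.
Variables (n s : nat) (al : vec n) (i : 'I_s.+1 -> 'I_n) (j : 'I_s.-1 -> 'I_n).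

Lemma plA_addE k t :
  plA al i k t + (i k == t) = al t + \sum_(l < s.+1) (i l == t).
Proof. by rewrite ffunE -addnA [in RHS](bigD1 k) //= (addnC (i k == t)). Qed.

Lemma plA_exchange k k0 :
  plA al i k = vsub (vadd (plA al i k0) (eps (i k0))) (eps (i k)).
Proof.
apply: vec_ext => t; rewrite vexchangeE ![t == i _]eq_sym plA_addE -(plA_addE k).
by rewrite addnK.
Qed.

Lemma plB_exchange k k0 :
  plB al i j k = vsub (vadd (plB al i j k0) (eps (i k))) (eps (i k0)).
Proof. by apply: vec_ext => t; rewrite vexchangeE !ffunE ![t == i _]eq_sym; lia. Qed.

Lemma plA_gtE k0 t :
  (al t < plA al i k0 t) = [exists k, (k != k0) && (i k == t)].
Proof.
rewrite ffunE -{1}[al t]addn0 ltn_add2l lt0n sum_nat_eq0 negb_forall.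
by apply: eq_existsb => k; rewrite negb_imply eqb0 negbK.
Qed.

Lemma plB_geq k t : al t + (i k == t) <= plB al i j k t.
Proof. by rewrite ffunE leq_addr. Qed.

End PlueckerTerms.

Lemma K_null_map_enum (T : finType) (f : pred T) :
  K_null [seq f k | k <- enum T] = (#|f| != 1).
Proof. by rewrite /K_null count_map enumT cardE /enum_mem size_filter. Qed.

Lemma card_neq1P (T : finType) (f : pred T) :
  reflect (forall k0, f k0 -> exists2 k, k != k0 & f k) (#|f| != 1).
Proof.
apply: (iffP idP) => [card_f k0 fk0 | other].
  have /card_gt1P [x [y [fx fy xy]]] : 1 < #|f|.
    by rewrite ltn_neqAle eq_sym card_f; apply/card_gt0P; exists k0.
  have [xk0 | xk0] := eqVneq x k0; last by exists x.
  by exists y; rewrite // -xk0 eq_sym.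
apply/negP => /card1P [x fx].
have [k kx fk] : exists2 k, k != x & f k.
  by apply: other; move: (fx x); rewrite !inE eqxx.
by move: (fx k); rewrite !inE unfold_in fk (negbTE kx).
Qed.

Lemma Mconvex_Pluecker n r (J : {fset vec n}) : Mconvex J -> Pluecker r J.
Proof.
move=> J_M s _ al _ _ i j _; rewrite K_null_map_enum.
apply/card_neq1P => k0 /andP [A_J B_J]; set p := i k0.
suff [q [k [kk0 ikq AqJ BqJ]]] : exists q k, [/\ k != k0, i k = q,
    vsub (vadd (plA al i k0) (eps p)) (eps q) \in J &
    vsub (vadd (plB al i j k0) (eps q)) (eps p) \in J].
  exists k => //=.
  by rewrite /chi (plA_exchange _ _ k k0) (plB_exchange _ _ _ k k0) ikq AqJ BqJ.
have [/existsP [k /andP [kk0 /eqP ikp]] | p_once] :=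
  boolP [exists k, (k != k0) && (i k == p)].
  by exists p, k; rewrite !vexchange_id.
have A_lt_B : plA al i k0 p < plB al i j k0 p.
  rewrite (leq_trans _ (plB_geq al i j k0 p)) // eqxx addn1 ltnS leqNgt.
  by rewrite plA_gtE.
have [q [BqAq AqJ BqJ]] := J_M _ _ A_J B_J p A_lt_B.
have : al q < plA al i k0 q.
  exact: leq_ltn_trans (leq_trans (leq_addr _ _) (plB_geq al i j k0 q)) BqAq.
by rewrite plA_gtE => /existsP [k /andP [kk0 /eqP ikq]]; exists q, k.
Qed.

Lemma bigmin_leq_seq (T : eqType) (s : seq T) x0 (F : T -> nat) y :
  y \in s -> \big[minn/x0]_(z <- s) F z <= F y.
Proof.
elim: s => // z s IHs; rewrite big_cons in_cons => /predU1P [-> | /IHs].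
  exact: geq_minl.
exact: leq_trans (geq_minr _ _).
Qed.

Lemma sum_count_mem (T : finType) (s : seq T) : \sum_t count_mem t s = size s.
Proof.
elim: s => [|x s IHs]; first by rewrite big1.
by rewrite big_split /= IHs (bigD1 x) //= eqxx big1 // => t /negbTE; rewrite eq_sym => ->.
Qed.

Lemma exists_count_mem (T : finType) (f : T -> nat) :
  exists s : seq T, forall t, count_mem t s = f t.
Proof.
exists (flatten [seq nseq (f u) u | u <- enum T]) => t.
rewrite count_flatten -map_comp sumnE big_map (bigD1_seq t) ?mem_enum ?enum_uniq //=.
rewrite count_nseq /= eqxx mul1n big1_seq ?addn0 // => u /andP [ut _].
by rewrite count_nseq /= (negbTE ut) mul0n.
Qed.

Lemma sum_nth_eq (T : eqType) (s : seq T) x0 m t : size s = m ->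
  \sum_(l < m) (nth x0 s l == t) = count_mem t s.
Proof.
move=> <-; elim: s => [|x s IHs]; first by rewrite big_ord0.
by rewrite big_ord_recl /= IHs.
Qed.

Lemma sum_subn_sym (T : finType) (a b : T -> nat) :
  \sum_t a t = \sum_t b t -> \sum_t (a t - b t) = \sum_t (b t - a t).
Proof.
move=> sum_ab; apply/eqP; rewrite -(eqn_add2l (\sum_t a t)) {1}sum_ab -!big_split.
by apply/eqP/eq_bigr => t _ /=; lia.
Qed.

Section ExchangeFromPluecker.
Variables (n r : nat) (J : {fset vec n}).
Hypothesis J_Delta : forall b, b \in J -> in_Delta r b.
Variables (a b : vec n) (i : 'I_n) (P M : seq 'I_n).
Hypotheses (aJ : a \in J) (bJ : b \in J) (ab_i : a i < b i).
Hypothesis count_P : forall t, count_mem t P = a t - b t.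
Hypothesis count_M : forall t, count_mem t M = b t - a t - (i == t).

Lemma eq_i_leq_subn t : (i == t) <= b t - a t.
Proof. by case: eqP => [<- | _]; rewrite ?subn_gt0. Qed.

Lemma size_P : size P = (size M).+1.
Proof.
have sum_ab : \sum_t a t = \sum_t b t by rewrite (eqP (J_Delta aJ)) (eqP (J_Delta bJ)).
rewrite -sum_count_mem (eq_bigr _ (fun t _ => count_P t)) sum_subn_sym //.
rewrite -[(size M).+1]/(size (i :: M)) -sum_count_mem; apply: eq_bigr => t _ /=.
by rewrite count_M subnKC ?eq_i_leq_subn.
Qed.

Lemma mem_P q : q \in P -> b q < a q.
Proof. by rewrite -has_pred1 has_count count_P subn_gt0. Qed.

Lemma exchange_adjacent : M = [::] -> exists q, [/\ b q < a q,
  vsub (vadd a (eps i)) (eps q) \in J & vsub (vadd b (eps q)) (eps i) \in J].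
Proof.
move=> M0; have [q P_q] : exists q, P = [:: q].
  by move: size_P; rewrite M0; case: (P) => [|q []] // _; exists q.
have count_q t : (q == t) = a t - b t :> nat by rewrite -count_P P_q /= addn0.
have count0 t : b t - a t - (i == t) = 0 by rewrite -count_M M0.
exists q; split; first by apply: mem_P; rewrite P_q mem_seq1.
- suff -> : vsub (vadd a (eps i)) (eps q) = b by [].
  apply: vec_ext => t; rewrite vexchangeE ![t == _]eq_sym.
  by have := count_q t; have := count0 t; have := eq_i_leq_subn t; lia.
- suff -> : vsub (vadd b (eps q)) (eps i) = a by [].
  apply: vec_ext => t; rewrite vexchangeE ![t == _]eq_sym.
  by have := count_q t; have := count0 t; have := eq_i_leq_subn t; lia.
Qed.

Lemma exchange_Pluecker : Pluecker r J -> M != [::] -> exists q, [/\ b q < a q,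
  vsub (vadd a (eps i)) (eps q) \in J & vsub (vadd b (eps q)) (eps i) \in J].
Proof.
move=> J_Pl M_ne0; set s := size P.
pose alpha : vec n := [ffun t => minn (a t) (b t)].
pose ii (l : 'I_s.+1) := nth i (i :: P) l.
pose jj (m : 'I_s.-1) := nth i M m.
have sum_ii t : \sum_(l < s.+1) (ii l == t) = (i == t) + (a t - b t).
  by rewrite sum_nth_eq //= count_P.
have sum_jj t : \sum_(m < s.-1) (jj m == t) = b t - a t - (i == t).
  by rewrite sum_nth_eq ?count_M // /s size_P.
have A0 : plA alpha ii ord0 = a.
  apply: vec_ext => t; have := plA_addE alpha ii ord0 t.
  by rewrite sum_ii [alpha t]ffunE -[ii ord0]/i; lia.
have B0 : plB alpha ii jj ord0 = b.
  apply: vec_ext => t; rewrite ffunE sum_jj [alpha t]ffunE -[ii ord0]/i.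
  by have := eq_i_leq_subn t; lia.
have s_range : 2 <= s <= r.
  rewrite /s size_P ltnS lt0n size_eq0 M_ne0 -size_P /s -sum_count_mem.
  by rewrite -(eqP (J_Delta aJ)) leq_sum // => t _; rewrite count_P leq_subr.
have alpha_Delta : in_Delta (r - s) alpha.
  have : \sum_t (alpha t + count_mem t P) = r.
    by rewrite -(eqP (J_Delta aJ)); apply: eq_bigr => t _; rewrite ffunE count_P; lia.
  by rewrite big_split /= sum_count_mem => <-; rewrite /in_Delta addnK.
have alpha_ge : vle (delta_minus J) alpha.
  by apply/forallP => t; rewrite !ffunE leq_min !bigmin_leq_seq.
have tot_le : vle (plTot alpha ii jj) (delta_plus J).
  apply/forallP => t; rewrite !ffunE sum_ii sum_jj.
  apply: (@leq_trans (maxn (a t) (b t))); first by have := eq_i_leq_subn t; lia.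
  rewrite geq_max; apply/andP.
  by split; apply: (leq_bigmax_seq (F := fun v : vec n => v t)).
have := J_Pl _ s_range _ alpha_Delta alpha_ge _ _ tot_le; rewrite K_null_map_enum.
case/card_neq1P/(_ ord0) => [|k k_ne0 /andP [AkJ BkJ]].
  by rewrite /= /chi A0 B0 aJ bJ.
have P_k : ii k \in P.
  by case: k k_ne0 {AkJ BkJ} => [[|l] lt_l] //= _; apply: mem_nth.
exists (ii k); split; first exact: mem_P.
  by rewrite -A0 -(plA_exchange alpha ii k ord0).
by rewrite -B0 -(plB_exchange alpha ii jj k ord0).
Qed.

End ExchangeFromPluecker.

Lemma Pluecker_Mconvex n r (J : {fset vec n}) :
  (forall b, b \in J -> in_Delta r b) -> Pluecker r J -> Mconvex J.
Proof.
move=> J_Delta J_Pl a b aJ bJ i ab_i.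
have [P count_P] := exists_count_mem (fun t => a t - b t).
have [M count_M] := exists_count_mem (fun t => b t - a t - (i == t)).
have [M0 | M_ne0] := eqVneq M [::].
  exact: (exchange_adjacent J_Delta aJ bJ ab_i count_P count_M M0).
exact: (exchange_Pluecker J_Delta aJ bJ ab_i count_P count_M J_Pl M_ne0).
Qed.

Theorem theoremA (n r : nat) (J : {fset vec n}) :
  (1 <= n)%N ->
  J != fset0%fset ->
  (forall b, b \in J -> in_Delta r b) ->
  (Mconvex J <-> Pluecker r J).
Proof.
move=> _ _ J_Delta; split; first exact: Mconvex_Pluecker.
exact: Pluecker_Mconvex.
Qed.
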